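(* Let $\mathbf{M}_1,\dots,\mathbf{M}_L$ be nonsingular $D\times D$ integer matrices and $\mathbf{R}$ an lcrm of them. Suppose there exist pairwise commutative and coprime integer matrices $\mathbf{N}_1,\dots,\mathbf{N}_L$ and a unimodular matrix $\mathbf{U}$ such that $\mathbf{R}=\mathbf{N}_1\mathbf{N}_2\cdots\mathbf{N}_L\mathbf{U}$ and $\mathbf{N}_i$ is a left divisor of $\mathbf{M}_i$ for each $i$. Let $\mathbf{W}_i=\mathbf{N}_1\cdots\mathbf{N}_{i-1}\mathbf{N}_{i+1}\cdots\mathbf{N}_L$. For each $i$ such that $\mathbf{N}_i$ is not unimodular there exist integer matrices $\widehat{\mathbf{W}}_i,\mathbf{Q}_i$ with $\mathbf{W}_i\widehat{\mathbf{W}}_i+\mathbf{N}_i\mathbf{Q}_i=\mathbf{I}$; fix such $\widehat{\mathbf{W}}_i$, and set $\widehat{\mathbf{W}}_i=\mathbf{0}$ if $\mathbf{N}_i$ is unimodular. Then for every $\mathbf{m}\in\mathcal{N}(\mathbf{R})$ with remainders $\mathbf{r}_i=\langle\mathbf{m}\rangle_{\mathbf{M}_i}$, $$\mathbf{m}=\Big\langle\sum_{i=1}^L\mathbf{W}_i\widehat{\mathbf{W}}_i\mathbf{r}_i\Big\rangle_{\mathbf{R}}.$$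
   Context: All matrices are $D\times D$ integer matrices; $\mathbf{I}$ is the identity. Unimodular: integer with determinant $\pm1$. $\mathbf{A}$ is a left divisor of $\mathbf{M}$ if $\mathbf{A}^{-1}\mathbf{M}$ is an integer matrix. Commuting nonsingular integer matrices are coprime if all their common left (equivalently right) divisors are unimodular. An lcrm of $\mathbf{M}_1,\dots,\mathbf{M}_L$ is a nonsingular integer $\mathbf{R}$ with $\mathbf{R}=\mathbf{M}_i\mathbf{P}_i$ ($\mathbf{P}_i$ integer) for all $i$ such that every such common right multiple equals $\mathbf{R}\mathbf{A}$ for some integer $\mathbf{A}$. For nonsingular integer $\mathbf{M}$, $\mathcal{N}(\mathbf{M})=\{\mathbf{k}\in\mathbb{Z}^D:\mathbf{k}=\mathbf{M}\mathbf{x},\ \mathbf{x}\in[0,1)^D\}$, and $\langle\mathbf{m}\rangle_{\mathbf{M}}$ is the unique $\mathbf{r}\in\mathcal{N}(\mathbf{M})$ with $\mathbf{m}-\mathbf{r}\in\{\mathbf{M}\mathbf{n}:\mathbf{n}\in\mathbb{Z}^D\}$. *)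

From HB Require Import structures.
From mathcomp Require Import all_boot all_order all_algebra.
Set Implicit Arguments. Unset Strict Implicit. Unset Printing Implicit Defensive.
Import Order.TTheory GRing.Theory Num.Theory.
Local Open Scope ring_scope.

Notation imx D := 'M[int]_D.
Notation ivec D := 'cV[int]_D.

Definition nonsingular D (M : imx D) : Prop := \det M != 0.

Definition unimodular D (M : imx D) : Prop := (\det M = 1) \/ (\det M = -1).

Definition left_divisor D (A M : imx D) : Prop :=
  nonsingular A /\ exists P : imx D, M = A *m P.

Definition mx_coprime D (A B : imx D) : Prop :=
  forall C : imx D, left_divisor C A -> left_divisor C B -> unimodular C.

Definition is_lcrm D L (M : 'I_L -> imx D) (R : imx D) : Prop :=
  nonsingular R /\
  (forall i, exists P : imx D, R = M i *m P) /\
  (forall S : imx D, (forall i, exists P : imx D, S = M i *m P) ->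
     exists A : imx D, S = R *m A).

Definition int2rat_mx m n (A : 'M[int]_(m, n)) : 'M[rat]_(m, n) :=
  map_mx (fun z : int => z%:~R) A.

(* k \in N(M): k = M x with x \in [0,1)^D.  Since M is nonsingular and k is
   integral, x = M^{-1} k is necessarily rational, so x ranges over Q^D. *)
Definition inN D (M : imx D) (k : ivec D) : Prop :=
  exists x : 'cV[rat]_D,
    (forall j, 0 <= x j 0 /\ x j 0 < 1) /\
    int2rat_mx k = int2rat_mx M *m x.

(* r = <m>_M : r \in N(M) and m - r \in M Z^D  (r is unique for nonsingular M) *)
Definition is_rem D (M : imx D) (m r : ivec D) : Prop :=
  inN M r /\ exists n : ivec D, m - r = M *m n.

Definition prodmx D (s : seq (imx D)) : imx D := foldr mulmx 1%:M s.

Definition prodN D L (N : 'I_L -> imx D) : imx D :=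
  prodmx [seq N j | j <- enum 'I_L].

Definition Wmx D L (N : 'I_L -> imx D) (i : 'I_L) : imx D :=
  prodmx [seq N j | j <- enum 'I_L & j != i].

From HB Require Import structures.
From mathcomp Require Import all_boot all_order all_algebra.
Import Order.TTheory GRing.Theory Num.Theory.
Local Open Scope ring_scope.
Set Implicit Arguments. Unset Strict Implicit.

(* The sum S := \sum_i W_i Wh_i r_i is congruent to m modulo every N_j: the
   terms with i <> j vanish because N_j is a factor of W_i, and W_j Wh_j is
   the identity modulo N_j while r_j = m modulo M_j, hence modulo N_j.  Since
   the N_j commute pairwise and satisfy left Bezout identities (coprimality
   gives these via the Smith normal form of [N_i N_j]), the lattices N_j Z^D
   intersect in (N_1 ... N_L) Z^D = R Z^D.  So S - m is in R Z^D and, as m is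
   in N(R), m is the remainder of S modulo R. *)

Definition in_lattice (R : pzSemiRingType) D (A : 'M[R]_D) (x : 'cV[R]_D) :=
  exists c, x = A *m c.

Definition left_bezout (R : pzSemiRingType) D (A B : 'M[R]_D) :=
  exists X Y, A *m X + B *m Y = 1%:M.

Section Lattice.
Variables (R : pzRingType) (D : nat).
Implicit Types (A B C : 'M[R]_D) (x y : 'cV[R]_D).

Lemma in_lattice0 A : in_lattice A 0.
Proof. by exists 0; rewrite mulmx0. Qed.

Lemma in_latticeD A x y :
  in_lattice A x -> in_lattice A y -> in_lattice A (x + y).
Proof. by move=> [a ->] [b ->]; exists (a + b); rewrite mulmxDr. Qed.

Lemma in_latticeB A x y :
  in_lattice A x -> in_lattice A y -> in_lattice A (x - y).
Proof. by move=> [a ->] [b ->]; exists (a - b); rewrite mulmxBr. Qed.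

Lemma in_lattice_mulmx A y : in_lattice A (A *m y).
Proof. by exists y. Qed.

Lemma in_lattice_divisor A B x :
  (exists P, B = A *m P) -> in_lattice B x -> in_lattice A x.
Proof. by move=> [P ->] [c ->]; exists (P *m c); rewrite mulmxA. Qed.

Lemma left_bezout_mulr A B C :
  A *m B = B *m A -> left_bezout A B -> left_bezout A C ->
  left_bezout A (B *m C).
Proof.
move=> cAB [X [Y eB]] [X' [Y' eC]].
exists (X + B *m X' *m Y), (Y' *m Y); rewrite -[RHS]eB mulmxDr -addrA.
congr (_ + _); rewrite -[in RHS](mul1mx Y) -eC mulmxDl mulmxDr.
by rewrite !mulmxA cAB.
Qed.

End Lattice.

Section CommutingBezout.
Variables (R : idomainType) (D : nat).
Implicit Types (A B X Y U : 'M[R]_D) (x : 'cV[R]_D).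

(* The block matrix [X -B; Y A] has determinant 1; the blocks of its inverse
   turn the left Bezout identity into a right one. *)
Lemma left_to_right_bezout A B X Y :
  A *m B = B *m A -> \det A != 0 -> A *m X + B *m Y = 1%:M ->
  exists C E, X *m A - B *m C = 1%:M /\ X *m B = B *m E.
Proof.
move=> cAB dA eAB.
pose T := block_mx X (- B) Y A : 'M[R]_(D + D).
have eT : block_mx A B 0 1%:M *m T = block_mx 1%:M 0 Y A.
  by rewrite mulmx_block !mul0mx !mul1mx !add0r eAB mulmxN cAB addNr.
have detT : \det T = 1.
  have := congr1 determinant eT.
  rewrite det_mulmx det_ublock det_lblock det1 mulr1 mul1r => e.
  by apply: (mulfI dA); rewrite e mulr1.
have uT : T \in unitmx by rewrite unitmxE detT unitr1.
have eAB_T : row_mx A B = row_mx 1%:M 0 *m invmx T.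
  rewrite -[row_mx A B]mulmx1 -(mulmxV uT) mulmxA mul_row_block.
  by rewrite eAB mulmxN cAB addNr.
have eTT := mulmxV uT.
rewrite -[invmx T]submxK in eAB_T eTT.
rewrite mul_row_block !mul1mx !mul0mx !addr0 in eAB_T.
case/eq_row_mx: eAB_T => -> eB.
rewrite mulmx_block scalar_mx_block in eTT.
case/eq_block_mx: eTT => e11 e12 _ _.
exists (dlsubmx (invmx T)), (drsubmx (invmx T)); split.
  by rewrite -e11 mulNmx.
by apply/eqP; rewrite -subr_eq0 -mulNmx; apply/eqP; rewrite -e12 eB.
Qed.

Lemma in_lattice_mul A B x :
  A *m B = B *m A -> \det A != 0 -> left_bezout A B ->
  in_lattice A x -> in_lattice B x -> in_lattice (A *m B) x.
Proof.
move=> cAB dA [X [Y eAB]] [a xa] [b xb].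
have [C [E [eA eB]]] := left_to_right_bezout cAB dA eAB.
rewrite xa; have -> : a = B *m (E *m b - C *m a).
  by rewrite mulmxBr !mulmxA -eB -!mulmxA -xb xa !mulmxA -mulmxBl eA mul1mx.
by rewrite mulmxA; apply: in_lattice_mulmx.
Qed.

Lemma in_lattice_mul_unit A U x :
  U \in unitmx -> in_lattice A x -> in_lattice (A *m U) x.
Proof.
by move=> uU [c ->]; exists (invmx U *m c); rewrite !mulmxA mulmxK.
Qed.

End CommutingBezout.

Section IntegerMatrices.
Variable D : nat.
Implicit Types A B : imx D.

Lemma unimodularP A : reflect (unimodular A) ((\det A == 1) || (\det A == -1)).
Proof. by apply: (iffP orP) => -[/eqP|/eqP]; by [left | right]. Qed.

Lemma unimodular_unitmx A : unimodular A -> A \in unitmx.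
Proof. by rewrite unitmxE => -[] ->; rewrite ?unitr1 ?unitrN1. Qed.

(* G is the left part of the Smith form of [A B]: [A B] = G * (top rows of
   the right transformation), and G = [A B] times a column of its inverse. *)
Lemma left_gcd_exists A B : exists G : imx D,
  [/\ exists P, A = G *m P, exists P, B = G *m P
    & exists X Y, G = A *m X + B *m Y].
Proof.
have [Lm uL [Rm uR [d _ eM]]] := int_Smith_normal_form (row_mx A B).
set Dl := \matrix_(i, j) _ in eM.
have rD : rsubmx Dl = 0.
  apply/matrixP => i j; rewrite !mxE /=.
  suff /negbTE -> : i != D + j :> nat by rewrite mulr0n.
  by rewrite neq_ltn (leq_trans (ltn_ord i)) ?leq_addr.
pose G := Lm *m lsubmx Dl.
have eAB : row_mx A B = G *m usubmx Rm.
  rewrite eM -[Dl]hsubmxK rD mul_mx_row mulmx0 -[Rm]vsubmxK mul_row_col.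
  by rewrite mul0mx addr0 col_mxKu.
have eG : row_mx G 0 = row_mx A B *m invmx Rm.
  by rewrite eM -mulmxA mulmxV // mulmx1 -[Dl]hsubmxK rD mul_mx_row mulmx0.
pose Z := invmx Rm *m col_mx 1%:M (0 : 'M[int]_(D, D)).
exists G; split.
- by exists (lsubmx (usubmx Rm)); rewrite mulmx_lsub -eAB row_mxKl.
- by exists (rsubmx (usubmx Rm)); rewrite mulmx_rsub -eAB row_mxKr.
exists (usubmx Z), (dsubmx Z).
by rewrite -mul_row_col vsubmxK /Z mulmxA -eG mul_row_col mulmx1 mul0mx addr0.
Qed.

Lemma coprime_left_bezout A B :
  \det A != 0 -> mx_coprime A B -> left_bezout A B.
Proof.
move=> dA cAB; have [G [[P eA] [Q eB] [X [Y eG]]]] := left_gcd_exists A B.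
have dG : \det G != 0.
  by apply: contraNneq dA => dG0; rewrite eA det_mulmx dG0 mul0r.
have uG : G \in unitmx.
  by apply/unimodular_unitmx/cAB; split=> //; [exists P | exists Q].
exists (X *m invmx G), (Y *m invmx G).
by rewrite !mulmxA -mulmxDl -eG mulmxV.
Qed.

End IntegerMatrices.

Section Products.
Variables (D : nat) (I : eqType) (N : I -> imx D).
Hypothesis commN : forall i j, N i *m N j = N j *m N i.
Hypothesis detN : forall i, \det (N i) != 0.
Hypothesis bezoutN : forall i j, i != j -> left_bezout (N i) (N j).

Lemma prodmx_comm i s : N i *m prodmx (map N s) = prodmx (map N s) *m N i.
Proof.
elim: s => [|j s IH] /=; first by rewrite mulmx1 mul1mx.
by rewrite mulmxA commN -!mulmxA IH.
Qed.

Lemma prodmx_left_factor j s :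
  j \in s -> exists P, prodmx (map N s) = N j *m P.
Proof.
elim: s => [|k s IH] //=; rewrite in_cons => /orP[/eqP <-|js].
  by exists (prodmx (map N s)).
have [P ->] := IH js; exists (N k *m P).
by rewrite !mulmxA commN.
Qed.

Lemma left_bezout_prodmx i s :
  i \notin s -> left_bezout (N i) (prodmx (map N s)).
Proof.
elim: s => [|j s IH] /=.
  by exists 0, 1%:M; rewrite mulmx0 add0r mulmx1.
rewrite in_cons negb_or => /andP[ij si].
exact: left_bezout_mulr (commN i j) (bezoutN ij) (IH si).
Qed.

Lemma in_lattice_prodmx s x : uniq s ->
  (forall j, j \in s -> in_lattice (N j) x) -> in_lattice (prodmx (map N s)) x.
Proof.
elim: s => [|j s IH] /=; first by exists x; rewrite mul1mx.
case/andP=> js us hx.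
apply: in_lattice_mul (prodmx_comm j s) (detN j) (left_bezout_prodmx js) _ _.
  by apply: hx; rewrite mem_head.
by apply: IH => // k ks; apply: hx; rewrite in_cons ks orbT.
Qed.

End Products.

Section Reconstruction.
Variables (D L : nat) (M N Wh : 'I_L -> imx D).
Hypothesis commN : forall i j, N i *m N j = N j *m N i.
Hypothesis N_divides_M : forall i, exists P, M i = N i *m P.

Lemma Wmx_left_factor i j : i != j -> exists P, Wmx N i = N j *m P.
Proof.
by move=> ij; apply: prodmx_left_factor; rewrite // mem_filter eq_sym ij mem_enum.
Qed.

Lemma reconstruction_congr (m : ivec D) (r : 'I_L -> ivec D) j :
  (exists Q, Wmx N j *m Wh j + N j *m Q = 1%:M) ->
  (forall i, in_lattice (M i) (m - r i)) ->
  in_lattice (N j) (\sum_(i < L) Wmx N i *m Wh i *m r i - m).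
Proof.
move=> [Q eQ] hr; rewrite (bigD1 j) //= addrAC addrC.
apply: in_latticeD.
  apply: (big_ind (in_lattice (N j))) => [||i ij].
  - exact: in_lattice0.
  - exact: in_latticeD.
  have [P ->] := Wmx_left_factor ij.
  by rewrite -!mulmxA; apply: in_lattice_mulmx.
have -> : Wmx N j *m Wh j *m r j - m = - (m - r j) - N j *m (Q *m r j).
  by rewrite -[Wmx N j *m Wh j](addrK (N j *m Q)) eQ mulmxBl mul1mx mulmxA
    opprB addrAC.
apply: in_latticeB; last exact: in_lattice_mulmx.
rewrite -sub0r; apply: in_latticeB (in_lattice0 _) _.
exact: in_lattice_divisor (N_divides_M j) (hr j).
Qed.

End Reconstruction.

Theorem corollary1 (D L : nat) (M : 'I_L -> 'M[int]_D) (R : 'M[int]_D)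
    (N : 'I_L -> 'M[int]_D) (U : 'M[int]_D) :
  (forall i, nonsingular (M i)) ->
  is_lcrm M R ->
  (forall i j, i != j -> N i *m N j = N j *m N i /\ mx_coprime (N i) (N j)) ->
  unimodular U ->
  R = prodN N *m U ->
  (forall i, left_divisor (N i) (M i)) ->
  (forall i, ~ unimodular (N i) ->
     exists Wh Q : 'M[int]_D, Wmx N i *m Wh + N i *m Q = 1%:M) /\
  (forall Wh : 'I_L -> 'M[int]_D,
     (forall i, unimodular (N i) -> Wh i = 0) ->
     (forall i, ~ unimodular (N i) ->
        exists Q : 'M[int]_D, Wmx N i *m Wh i + N i *m Q = 1%:M) ->
     forall (m : 'cV[int]_D) (r : 'I_L -> 'cV[int]_D),
       inN R m ->
       (forall i, is_rem (M i) m (r i)) ->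
       is_rem R (\sum_(i < L) Wmx N i *m Wh i *m r i) m).
Proof.
move=> _ _ hN uU -> hdiv.
have detN i : \det (N i) != 0 by case: (hdiv i).
have commN i j : N i *m N j = N j *m N i.
  by case: (eqVneq i j) => [-> // | /hN[]].
have bezoutN i j : i != j -> left_bezout (N i) (N j).
  by move=> /hN[_]; apply: coprime_left_bezout.
have bezoutW i : left_bezout (N i) (Wmx N i).
  by apply: left_bezout_prodmx; rewrite // mem_filter eqxx.
split=> [i _ | Wh Wh0 hWh m r hm hr].
  by have [X [Y eW]] := bezoutW i; exists Y, X; rewrite addrC.
split=> //; apply: in_lattice_mul_unit (unimodular_unitmx uU) _.
apply: in_lattice_prodmx (enum_uniq _) _ => // j _.
apply: (reconstruction_congr commN (fun i => (hdiv i).2) _ (fun i => (hr i).2)).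
have [uNj|] := unimodularP (N j); last exact: hWh.
exists (invmx (N j)); rewrite Wh0 // mulmx0 add0r mulmxV //.
exact: unimodular_unitmx.
Qed.
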